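(* Let $F$ be a field of characteristic not $2$, let $a\in F^*$ be a non-square, and let $L=F(\sqrt{a})$. Then $F^{(3)}\subset L^{(3)}$.
   Context: All fields are taken inside a fixed quadratic closure $F_q$ of $F$. For a field $K$ of characteristic not $2$, define $K^{(1)}=K$ and, for $n\ge 1$, $K^{(n+1)}$ is the compositum of all quadratic extensions of $K^{(n)}$ which are Galois over $K$. *)

From mathcomp Require Import all_boot all_order all_algebra.
Set Implicit Arguments. Unset Strict Implicit. Unset Printing Implicit Defensive.
Import GRing.Theory.
Local Open Scope ring_scope.

Section Defs.
Variable Om : fieldType.

Definition incl (A B : Om -> Prop) := forall x, A x -> B x.

Definition is_subfield (K : Om -> Prop) : Prop :=
  [/\ K 0, K 1, (forall x y, K x -> K y -> K (x - y)),
      (forall x y, K x -> K y -> K (x * y)) & (forall x, K x -> K x^-1)].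

Definition quad_closure (F : Om -> Prop) : Prop :=
  [/\ is_subfield F,
      (forall x : Om, exists y, y * y = x) &
      (forall E : Om -> Prop, is_subfield E -> incl F E ->
         (forall x, E x -> exists y, E y /\ y * y = x) -> forall x, E x)].

Definition adjoin (K : Om -> Prop) (r : Om) : Om -> Prop :=
  fun x => forall E, is_subfield E -> incl K E -> E r -> E x.

(* M is a quadratic extension of K: K <= M and [M:K] = 2, i.e. M has a
   K-basis {1, u}. *)
Definition quad_ext (K M : Om -> Prop) : Prop :=
  [/\ is_subfield K, is_subfield M, incl K M &
      exists u, [/\ M u, ~ K u &
        forall m, M m -> exists a b, [/\ K a, K b & m = a + b * u]]].

(* M is Galois over K: K <= M and every element of M is a root of a
   separable polynomial over K which splits in M. *)
Definition galois_over (K M : Om -> Prop) : Prop :=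
  [/\ is_subfield K, is_subfield M, incl K M &
      forall x, M x -> exists r : seq Om,
        [/\ uniq r, x \in r, (forall z, z \in r -> M z) &
            forall i, K ((\prod_(z <- r) ('X - z%:P))`_i)]].

Definition compositum (B : Om -> Prop) (S : (Om -> Prop) -> Prop) : Om -> Prop :=
  fun x => forall E, is_subfield E -> incl B E ->
             (forall M, S M -> incl M E) -> E x.

(* kpow K n = K^{(n+1)} *)
Fixpoint kpow (K : Om -> Prop) (n : nat) : Om -> Prop :=
  match n with
  | 0 => K
  | m.+1 => compositum (kpow K m)
              (fun M => quad_ext (kpow K m) M /\ galois_over K M)
  end.

Definition ksup (K : Om -> Prop) (n : nat) : Om -> Prop := kpow K n.-1.

End Defs.

(* Let N be a quadratic extension of F^(n) that is Galois over F; completing the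
   square, N lies in F^(n)(s) with s^2 in F^(n). If L contains F, either s lies in
   L^(n), or L^(n)(s) is a quadratic extension of L^(n) which is Galois over L:
   L^(n) is Galois over L, and s is a root of a separable polynomial over F whose
   roots lie in N. By induction F^(n) <= L^(n) for every n and every extension L of
   F, so of the hypotheses of the theorem only 2 != 0 is used.
   Galois-ness survives composita because, for K <= M, the elements of M that are
   roots of separable polynomials over K splitting in M form a field. These are
   exactly the eigenvalues of K-matrices that are diagonalizable with eigenvalues in M; if
   P A P^-1 and Q B Q^-1 are diagonal, then W |-> P^-1 W Q diagonalizes both
   W |-> A W + W B and W |-> A W B, with eigenvalues a_i + b_j and a_i b_j. *)

From HB Require Import structures.
From mathcomp Require Import all_boot all_order all_algebra.
From mathcomp Require Import ring.
From Stdlib Require Import ClassicalEpsilon.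
Set Implicit Arguments. Unset Strict Implicit. Unset Printing Implicit Defensive.
Import GRing.Theory.
Local Open Scope ring_scope.

Section Subfield.
Variables (Om : fieldType) (K : Om -> Prop).
Hypothesis hK : is_subfield K.

Lemma subfield0 : K 0. Proof. by case: hK. Qed.
Lemma subfield1 : K 1. Proof. by case: hK. Qed.
Lemma subfieldB x y : K x -> K y -> K (x - y). Proof. by case: hK => _ _ h _ _; apply: h. Qed.
Lemma subfieldM x y : K x -> K y -> K (x * y). Proof. by case: hK => _ _ _ h _; apply: h. Qed.
Lemma subfieldV x : K x -> K x^-1. Proof. by case: hK => _ _ _ _ h; apply: h. Qed.

Lemma subfieldN x : K x -> K (- x).
Proof. by rewrite -sub0r; apply: subfieldB subfield0. Qed.

Lemma subfieldD x y : K x -> K y -> K (x + y).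
Proof. by move=> Kx Ky; rewrite -[y]opprK; apply/subfieldB/subfieldN. Qed.

Lemma subfield_polyV (p : {poly Om}) (x : Om) :
  (forall i, K p`_i) -> p != 0 -> root p x -> x != 0 ->
  exists2 q : {poly Om}, (forall i, K q`_i) & x^-1 = q.[x].
Proof.
move=> Kp p0 px x0; have [k [q /implyP/(_ p0) q0 epq]] := multiplicity_XsubC p 0.
rewrite subr0 in epq.
have Kq i : K q`_i by have := Kp (i + k); rewrite epq coefMXn ltnNge leq_addl addnK.
have qx : root q x.
  by move: px; rewrite /root epq hornerM hornerXn mulf_eq0 expf_eq0 (negPf x0) andbF orbF.
have def_q : q = drop_poly 1 q * 'X + (q`_0)%:P.
  by apply/polyP => -[|i]; rewrite coefD coefMX coefC coef_drop_poly ?addr0 ?add0r ?addn1.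
have q00 : q`_0 != 0 by rewrite -horner_coef0.
exists (- (q`_0)^-1 *: drop_poly 1 q).
  by move=> i; rewrite coefZ coef_drop_poly; apply/subfieldM/Kq/subfieldN/subfieldV.
apply: (mulIf x0); rewrite mulVf // hornerZ -mulrA -hornerMX.
move: qx; rewrite /root {1}def_q hornerD hornerC addr_eq0 => /eqP ->.
by rewrite mulrN mulNr opprK mulVf.
Qed.

End Subfield.

Section LinearMatrices.
Variables (R : fieldType) (n m : nat).
Implicit Types (W E : 'M[R]_(n, m)) (f g : {linear 'M[R]_(n, m) -> 'M[R]_(n, m)}).

Lemma mxvec_mul_diag W E : mxvec W *m diag_mx (mxvec E) = mxvec (map2_mx *%R W E).
Proof.
by apply/rowP => k; case/mxvec_indexP: k => i j; rewrite mul_mx_diag !mxE !mxvecE mxE.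
Qed.

Lemma lin_mx_unit f g : cancel f g -> lin_mx f \in unitmx.
Proof.
move=> fK; suff /mulmx1_unit[] : lin_mx f *m lin_mx g = 1%:M by [].
by apply/eqP/mulmxP => u; rewrite mulmxA !mul_rV_lin mxvecK fK vec_mxK mulmx1.
Qed.

Lemma lin_mx_diag_conj f g E : (forall W, f (g W) = g (map2_mx *%R W E)) ->
  lin_mx g *m lin_mx f = diag_mx (mxvec E) *m lin_mx g.
Proof.
move=> fg; apply/eqP/mulmxP => u; rewrite !mulmxA !mul_rV_lin mxvecK fg.
by rewrite -[u in u *m diag_mx _]vec_mxK mxvec_mul_diag mxvecK.
Qed.

End LinearMatrices.

Lemma conj_mulmx_cancel (R : fieldType) n m (P : 'M[R]_n) (Q : 'M[R]_m) :
  P \in unitmx -> Q \in unitmx ->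
  cancel (mulmxr Q \o mulmx (invmx P)) (mulmxr (invmx Q) \o mulmx P).
Proof. by move=> Pu Qu W /=; rewrite !mulmxA mulmxV // mul1mx mulmxK. Qed.

Lemma simmx_invmx (R : fieldType) n (Q A D : 'M[R]_n) :
  Q \in unitmx -> Q *m A = D *m Q -> A *m invmx Q = invmx Q *m D.
Proof. by move=> Qu QA; rewrite -[A]mul1mx -(mulVmx Qu) -(mulmxA _ Q) QA !mulmxA mulmxK. Qed.

Section GaloisElements.
Variables (Om : fieldType) (K M : Om -> Prop).
Hypotheses (hK : is_subfield K) (hM : is_subfield M) (hKM : incl K M).

Definition galois_elt (x : Om) := exists r : seq Om,
  [/\ uniq r, x \in r, (forall z, z \in r -> M z) &
      forall i, K ((\prod_(z <- r) ('X - z%:P))`_i)].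

Definition subfield_mem : pred Om :=
  fun x => if excluded_middle_informative (K x) then true else false.

Lemma subfield_memP x : reflect (K x) (subfield_mem x).
Proof. by rewrite /subfield_mem; case: excluded_middle_informative => h; constructor. Qed.

Fact subfield_mem_divring_closed : divring_closed subfield_mem.
Proof.
split; first exact/subfield_memP/(subfield1 hK).
  by move=> x y /subfield_memP Kx /subfield_memP Ky; apply/subfield_memP/(subfieldB hK).
move=> x y /subfield_memP Kx /subfield_memP Ky.
by apply/subfield_memP/(subfieldM hK) => //; apply: subfieldV.
Qed.
HB.instance Definition _ :=
  GRing.isDivringClosed.Build _ subfield_mem subfield_mem_divring_closed.

(* K as a field of its own, so that mxminpoly_map shows that minimal polynomials of
   K-matrices have coefficients in K. *)
Record subK := SubK { subK_val :> Om; subK_valP : subfield_mem subK_val }.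
HB.instance Definition _ := [isSub for subK_val].
HB.instance Definition _ := [Choice of subK by <:].
HB.instance Definition _ := [SubChoice_isSubComUnitRing of subK by <:].
HB.instance Definition _ := [SubComUnitRing_isSubIntegralDomain of subK by <:].
HB.instance Definition _ := [SubIntegralDomain_isSubField of subK by <:].

Lemma subK_valK (c : subK) : K (val c).
Proof. exact/subfield_memP/subK_valP. Qed.

Definition split_eigenvalue (x : Om) :=
  exists n (A : 'M[subK]_n) (Q : 'M[Om]_n) (d : 'rV[Om]_n),
    [/\ Q \in unitmx, Q *m map_mx val A = diag_mx d *m Q,
        forall i, M (d 0 i) & exists i, x = d 0 i].

Lemma split_eigenvalue_const c : K c -> split_eigenvalue c.
Proof.
move=> Kc; have Kc' : subfield_mem c by apply/subfield_memP.
exists 1%N, (SubK Kc')%:M, 1%:M, (const_mx c); split.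
- exact: unitmx1.
- by rewrite map_scalar_mx mul1mx diag_const_mx mulmx1.
- by move=> i; rewrite mxE; apply: hKM.
- by exists ord0; rewrite mxE.
Qed.

Lemma split_eigenvalue_lin n m (f : 'M[subK]_(n, m) -> 'M[subK]_(n, m))
    (g T T' : {linear 'M[Om]_(n, m) -> 'M[Om]_(n, m)}) (E : 'M[Om]_(n, m)) :
  (forall W, map_mx val (f W) = g (map_mx val W)) -> cancel T T' ->
  (forall W, g (T W) = T (map2_mx *%R W E)) -> (forall i j, M (E i j)) ->
  forall i j, split_eigenvalue (E i j).
Proof.
move=> fg TK gT ME i j; exists (n * m)%N, (lin_mx f), (lin_mx T), (mxvec E); split.
- exact: lin_mx_unit TK.
- by rewrite (map_lin_mx fg); apply: lin_mx_diag_conj.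
- by move=> k; case/mxvec_indexP: k => a b; rewrite mxvecE.
- by exists (mxvec_index i j); rewrite mxvecE.
Qed.

Lemma split_eigenvalueD x y : split_eigenvalue x -> split_eigenvalue y ->
  split_eigenvalue (x + y).
Proof.
move=> [n [A [P [dA [Pu PA MdA [i ->]]]]]] [m [B [Q [dB [Qu QB MdB [j ->]]]]]].
pose E := \matrix_(i, j) (dA 0 i + dB 0 j).
have -> : dA 0 i + dB 0 j = E i j by rewrite mxE.
apply: (split_eigenvalue_lin (f := fun W => A *m W + W *m B)
  (g := mulmx (map_mx val A) \+ mulmxr (map_mx val B)) _ (conj_mulmx_cancel Pu Qu)).
- by move=> W; rewrite map_mxD !map_mxM.
- move=> W /=; rewrite !mulmxA (simmx_invmx Pu PA) -(mulmxA _ Q) QB !mulmxA.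
  have -> : map2_mx *%R W E = diag_mx dA *m W + W *m diag_mx dB.
    by apply/matrixP => a b; rewrite mul_diag_mx mul_mx_diag !mxE mulrDr mulrC.
  by rewrite mulmxDr mulmxDl !mulmxA.
- by move=> a b; rewrite mxE; apply: subfieldD.
Qed.

Lemma split_eigenvalueM x y : split_eigenvalue x -> split_eigenvalue y ->
  split_eigenvalue (x * y).
Proof.
move=> [n [A [P [dA [Pu PA MdA [i ->]]]]]] [m [B [Q [dB [Qu QB MdB [j ->]]]]]].
pose E := \matrix_(i, j) (dA 0 i * dB 0 j).
have -> : dA 0 i * dB 0 j = E i j by rewrite mxE.
apply: (split_eigenvalue_lin (f := fun W => A *m W *m B)
  (g := mulmxr (map_mx val B) \o mulmx (map_mx val A)) _ (conj_mulmx_cancel Pu Qu)).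
- by move=> W; rewrite !map_mxM.
- move=> W /=; rewrite !mulmxA (simmx_invmx Pu PA) -(mulmxA _ Q) QB !mulmxA.
  have -> : map2_mx *%R W E = diag_mx dA *m W *m diag_mx dB.
    by apply/matrixP => a b; rewrite mul_diag_mx mul_mx_diag !mxE mulrCA mulrA.
  by rewrite !mulmxA.
- by move=> a b; rewrite mxE; apply: subfieldM.
Qed.

Lemma split_eigenvalue_galois x : split_eigenvalue x -> galois_elt x.
Proof.
move=> [[|n] [A [Q [d [Qu QA Md [i ->]]]]]]; first by case: i.
have minA := simmx_minpoly Qu (introT (simmxP Qu) QA); rewrite mxminpoly_diag in minA.
exists (undup [seq d 0 i | i <- enum 'I_n.+1]); split.
- exact: undup_uniq.
- by rewrite mem_undup map_f ?mem_enum.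
- by move=> z; rewrite mem_undup => /mapP[k _ ->].
- by move=> k; rewrite -minA mxminpoly_map coef_map; apply: subK_valK.
Qed.

Lemma char_poly_split_eigenvalue n (A : 'M[subK]_n) (r : seq Om) x :
  uniq r -> (forall z, z \in r -> M z) -> x \in r ->
  char_poly (map_mx val A) = \prod_(z <- r) ('X - z%:P) -> split_eigenvalue x.
Proof.
move=> ur Mr xr; case: n A => [|n] A charA.
  have := congr1 (fun p : {poly Om} => size p) charA.
  rewrite /char_poly det_mx00 size_poly1 size_prod_XsubC.
  by case: r xr {ur Mr charA}.
have minA : mxminpoly (map_mx val A) %| \prod_(z <- r) ('X - z%:P).
  by rewrite -charA mxminpoly_dvd_char.
have [P Pu /diagonalizable_forPex[D /(simmxP Pu) PA]] :=
  (diagonalizableP (map_mx val A)).2 (ex_intro2 _ _ r ur minA).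
have minD := simmx_minpoly Pu (introT (simmxP Pu) PA); rewrite mxminpoly_diag in minD.
exists n.+1, A, P, D; split => //.
- move=> i; apply: Mr; rewrite -root_prod_XsubC; apply: root_dvdp minA _.
  by rewrite minD root_prod_XsubC mem_undup map_f ?mem_enum.
- have : root (mxminpoly (map_mx val A)) x by rewrite root_mxminpoly charA root_prod_XsubC.
  by rewrite minD root_prod_XsubC mem_undup => /mapP[i _ ->]; exists i.
Qed.

Lemma galois_split_eigenvalue x : galois_elt x -> split_eigenvalue x.
Proof.
move=> [r [ur xr Mr Kr]]; set p := \prod_(z <- r) ('X - z%:P) in Kr.
pose pK : {poly subK} := \poly_(i < size p) insubd 0 p`_i.
have pKE : map_poly val pK = p.
  apply/polyP => i; rewrite coef_map coef_poly.
  case: ltnP => [_ | ?] /=; last by rewrite nth_default.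
  by rewrite /= insubdK //; apply/subfield_memP/Kr.
have pK_monic : pK \is monic by rewrite -(map_monic val) pKE monic_prod_XsubC.
apply: (char_poly_split_eigenvalue (A := companionmx pK) ur Mr xr).
by rewrite -map_char_poly companionmxK.
Qed.

Lemma split_eigenvalue_horner (q : {poly Om}) x :
  (forall i, K q`_i) -> split_eigenvalue x -> split_eigenvalue q.[x].
Proof.
move=> + Sx; elim/poly_ind: q => [_ | q c IHq Kqc].
  by rewrite horner0; apply/split_eigenvalue_const/(subfield0 hK).
have Kc : K c by have := Kqc 0%N; rewrite coefD coefMX coefC add0r.
rewrite hornerMXaddC; apply: split_eigenvalueD; last exact: split_eigenvalue_const.
apply: split_eigenvalueM Sx; apply: IHq => i.
by have := Kqc i.+1; rewrite coefD coefMX coefC addr0.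
Qed.

Lemma galois_elt_base c : K c -> galois_elt c.
Proof. by move/split_eigenvalue_const/split_eigenvalue_galois. Qed.

Lemma galois_eltV x : galois_elt x -> galois_elt x^-1.
Proof.
have [-> _|x0 Gx] := eqVneq x 0; first by rewrite invr0; apply/galois_elt_base/(subfield0 hK).
have [r [_ xr _ Kr]] := Gx.
have [||q Kq ->] := subfield_polyV hK Kr _ _ x0.
- by rewrite monic_neq0 // monic_prod_XsubC.
- by rewrite root_prod_XsubC.
exact/split_eigenvalue_galois/split_eigenvalue_horner/galois_split_eigenvalue.
Qed.

Lemma galois_elt_subfield : is_subfield galois_elt.
Proof.
have G_S := galois_split_eigenvalue; have S_G := split_eigenvalue_galois.
split; [exact/galois_elt_base/(subfield0 hK) | exact/galois_elt_base/(subfield1 hK) | | |].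
- move=> x y /G_S Sx /G_S Sy; apply/S_G; rewrite -mulN1r.
  apply: split_eigenvalueD Sx (split_eigenvalueM _ Sy).
  exact: split_eigenvalue_const (subfieldN hK (subfield1 hK)).
- by move=> x y /G_S Sx /G_S Sy; apply/S_G/split_eigenvalueM.
- exact: galois_eltV.
Qed.

End GaloisElements.

Lemma galois_elt_widen_ext (Om : fieldType) (K M M' : Om -> Prop) x :
  incl M M' -> galois_elt K M x -> galois_elt K M' x.
Proof. by move=> MM' [r [ur xr Mr Kr]]; exists r; split=> // z /Mr/MM'. Qed.

Lemma galois_elt_widen_base (Om : fieldType) (K K' M : Om -> Prop) x :
  incl K K' -> galois_elt K M x -> galois_elt K' M x.
Proof. by move=> KK' [r [ur xr Mr Kr]]; exists r; split=> // i; apply/KK'. Qed.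

Section Compositum.
Variable Om : fieldType.
Implicit Types (B K L E N : Om -> Prop) (S : (Om -> Prop) -> Prop).

Lemma compositum_subfield B S : is_subfield (compositum B S).
Proof.
split=> [E hE _ _ | E hE _ _ | x y Cx Cy E hE BE SE | x y Cx Cy E hE BE SE | x Cx E hE BE SE].
- exact: subfield0.
- exact: subfield1.
- by apply: (subfieldB hE); [apply: Cx | apply: Cy].
- by apply: (subfieldM hE); [apply: Cx | apply: Cy].
- by apply: (subfieldV hE); apply: Cx.
Qed.

Lemma compositum_base B S : incl B (compositum B S).
Proof. by move=> x Bx E _ BE _; apply: BE. Qed.

Lemma compositum_gen B S N : S N -> incl N (compositum B S).
Proof. by move=> SN x Nx E _ _ SE; apply: SE SN _ Nx. Qed.

Lemma compositum_min B S E : is_subfield E -> incl B E ->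
  (forall N, S N -> incl N E) -> incl (compositum B S) E.
Proof. by move=> hE BE SE x; apply. Qed.

Lemma adjoin_subfield K r : is_subfield (adjoin K r).
Proof.
split=> [E hE _ _ | E hE _ _ | x y Cx Cy E hE KE Er | x y Cx Cy E hE KE Er | x Cx E hE KE Er].
- exact: subfield0.
- exact: subfield1.
- by apply: (subfieldB hE); [apply: Cx | apply: Cy].
- by apply: (subfieldM hE); [apply: Cx | apply: Cy].
- by apply: (subfieldV hE); apply: Cx.
Qed.

Lemma adjoin_base K r : incl K (adjoin K r).
Proof. by move=> x Kx E _ KE _; apply: KE. Qed.

Lemma kpow_subfield K n : is_subfield K -> is_subfield (kpow K n).
Proof. by case: n => [|n] //= _; apply: compositum_subfield. Qed.

Lemma galois_over_refl L : is_subfield L -> galois_over L L.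
Proof. by move=> hL; split=> // x; apply: galois_elt_base. Qed.

Lemma compositum_galois L B S : galois_over L B ->
  (forall N, S N -> galois_over L N) -> galois_over L (compositum B S).
Proof.
move=> [hL _ LB GB] GS; have hC := compositum_subfield B S.
have LC : incl L (compositum B S) by move=> x /LB; apply: compositum_base.
split=> //; apply: compositum_min; first exact: galois_elt_subfield.
  by move=> x /GB; apply: galois_elt_widen_ext; apply: compositum_base.
move=> N SN x; case: (GS N SN) => _ _ _ GN /GN.
by apply: galois_elt_widen_ext; apply: compositum_gen.
Qed.

Lemma kpow_galois L n : is_subfield L -> galois_over L (kpow L n).
Proof.
move=> hL; elim: n => [|n IHn] /=; first exact: galois_over_refl.
by apply: compositum_galois IHn _ => N [].
Qed.

End Compositum.

Section SquareRootExtension.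
Variable Om : fieldType.
Implicit Types (K L E N : Om -> Prop) (s : Om).

Definition sqrt_ext K s : Om -> Prop :=
  fun x => exists a b, [/\ K a, K b & x = a + b * s].

Lemma sqrt_ext_base K s : is_subfield K -> incl K (sqrt_ext K s).
Proof. by move=> hK x Kx; exists x, 0; split=> //; [apply: subfield0 | rewrite mul0r addr0]. Qed.

Lemma sqrt_ext_root K s : is_subfield K -> sqrt_ext K s s.
Proof. by move=> hK; exists 0, 1; split; [apply: subfield0 | apply: subfield1 | ring]. Qed.

Lemma sqrt_ext_min K E s : is_subfield E -> incl K E -> E s -> incl (sqrt_ext K s) E.
Proof.
move=> hE KE Es _ [a [b [Ka Kb ->]]].
by apply: (subfieldD hE); [apply: KE | apply: (subfieldM hE) => //; apply: KE].
Qed.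

Lemma sqrt_ext_widen K L s : incl K L -> incl (sqrt_ext K s) (sqrt_ext L s).
Proof. by move=> KL _ [a [b [Ka Kb ->]]]; exists a, b; split=> //; apply: KL. Qed.

Section NonSquare.
Variables (K : Om -> Prop) (s : Om).
Hypotheses (hK : is_subfield K) (Kss : K (s * s)) (nKs : ~ K s).

Lemma sqrt_ext_subfield : is_subfield (sqrt_ext K s).
Proof.
have KD := subfieldD hK; have KM := subfieldM hK.
split.
- exact: sqrt_ext_base (subfield0 hK).
- exact: sqrt_ext_base (subfield1 hK).
- move=> _ _ [a1 [b1 [Ka1 Kb1 ->]]] [a2 [b2 [Ka2 Kb2 ->]]].
  by exists (a1 - a2), (b1 - b2); split; [apply: (subfieldB hK) | apply: (subfieldB hK) | ring].
- move=> _ _ [a1 [b1 [Ka1 Kb1 ->]]] [a2 [b2 [Ka2 Kb2 ->]]].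
  exists (a1 * a2 + b1 * b2 * (s * s)), (a1 * b2 + b1 * a2).
  split; last by ring.
    by apply: (KD); apply: (KM) => //; apply: (KM).
  by apply: (KD); apply: (KM).
move=> _ [a [b [Ka Kb ->]]]; have [x0|x0] := eqVneq (a + b * s) 0.
  by rewrite x0 invr0; apply: sqrt_ext_base (subfield0 hK).
have y0 : a - b * s != 0.
  apply: contra_notN nKs => /eqP y0; have [b0|b0] := eqVneq b 0.
    by move: x0 y0; rewrite b0 mul0r addr0 subr0 => /eqP.
  suff -> : s = a / b by apply: (KM) => //; apply: subfieldV.
  by apply/(mulIf b0); rewrite mulfVK // mulrC; apply/eqP; rewrite eq_sym -subr_eq0 y0.
have N0 : a * a - b * b * (s * s) != 0.
  have -> : a * a - b * b * (s * s) = (a + b * s) * (a - b * s) by ring.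
  exact: mulf_neq0.
have KN : K (a * a - b * b * (s * s)).
  by apply: (subfieldB hK); apply: (KM) => //; apply: (KM).
exists (a / (a * a - b * b * (s * s))), (- b / (a * a - b * b * (s * s))); split.
- by apply: (KM) => //; apply: subfieldV.
- by apply: (KM); [apply: subfieldN | apply: subfieldV].
- by field; apply/andP.
Qed.

Lemma sqrt_ext_quad : quad_ext K (sqrt_ext K s).
Proof.
split=> //; [exact: sqrt_ext_subfield | exact: sqrt_ext_base |].
by exists s; split=> //; apply: sqrt_ext_root.
Qed.

Lemma sqrt_ext_galois L : galois_over L K -> galois_elt L (sqrt_ext K s) s ->
  galois_over L (sqrt_ext K s).
Proof.
move=> [hL _ LK GK] Gs; have hKs := sqrt_ext_subfield.
have LKs : incl L (sqrt_ext K s) by move=> x /LK; apply: sqrt_ext_base.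
split=> //; apply: sqrt_ext_min => //; first exact: galois_elt_subfield.
by move=> x /GK; apply: galois_elt_widen_ext; apply: sqrt_ext_base.
Qed.

End NonSquare.

Lemma quad_ext_sqrt K N : (2%:R : Om) != 0 -> quad_ext K N ->
  exists s, [/\ ~ K s, K (s * s), N s & incl N (sqrt_ext K s)].
Proof.
move=> two [hK hN KN [u [Nu nKu Ndec]]].
have [c [d [Kc Kd euu]]] := Ndec _ (subfieldM hN Nu Nu).
have K2 : K 2%:R by apply: (subfieldD hK); apply: subfield1.
have KM := subfieldM hK; have KD := subfieldD hK.
exists (2%:R * u - d); split.
- move=> Ks; apply: nKu.
  have -> : u = (2%:R * u - d + d) / 2%:R by field.
  by apply: (KM); [apply: (KD) | apply: subfieldV].
- have -> : (2%:R * u - d) * (2%:R * u - d) = 2%:R * 2%:R * c + d * d.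
    by rewrite (_ : c = u * u - d * u); [ring | rewrite euu; ring].
  by apply: (KD); apply: (KM) => //; apply: (KM).
- by apply: (subfieldB hN); [apply: (subfieldM hN) => //; apply: KN | apply: KN].
- move=> _ /Ndec[a [b [Ka Kb ->]]].
  exists (a + b * d / 2%:R), (b / 2%:R); split; last by field.
    by apply: (KD) => //; apply: (KM); [apply: (KM) | apply: subfieldV].
  by apply: (KM) => //; apply: subfieldV.
Qed.

End SquareRootExtension.

Lemma kpow_incl_step (Om : fieldType) (F L : Om -> Prop) n N :
  (2%:R : Om) != 0 -> is_subfield L -> incl F L -> incl (kpow F n) (kpow L n) ->
  quad_ext (kpow F n) N -> galois_over F N -> incl N (kpow L n.+1).
Proof.
move=> two hL FL FLn qN [_ _ _ GN].
have [s [_ Fss Ns NFs]] := quad_ext_sqrt two qN.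
have hLn := kpow_subfield n hL.
have LnS : incl (kpow L n) (kpow L n.+1) by apply: compositum_base.
have [Ls | nLs] := classic (kpow L n s).
  have FLnS : incl (kpow F n) (kpow L n.+1) by move=> y /FLn /LnS.
  by move=> x /NFs; apply: (sqrt_ext_min (kpow_subfield n.+1 hL) FLnS (LnS _ Ls)).
have Lss : kpow L n (s * s) by apply: FLn.
have NLs : incl N (sqrt_ext (kpow L n) s) by move=> x /NFs; apply: sqrt_ext_widen.
move=> x /NLs; apply: compositum_gen; split; first exact: sqrt_ext_quad.
apply: sqrt_ext_galois => //; first exact: kpow_galois.
exact: galois_elt_widen_ext NLs (galois_elt_widen_base FL (GN s Ns)).
Qed.

Lemma kpow_incl (Om : fieldType) (F L : Om -> Prop) n :
  (2%:R : Om) != 0 -> is_subfield L -> incl F L -> incl (kpow F n) (kpow L n).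
Proof.
move=> two hL FL; elim: n => [|n IHn] //=.
apply: compositum_min; first exact: (kpow_subfield n.+1).
  by move=> x /IHn; apply: compositum_base.
by move=> N [qN GN]; apply: kpow_incl_step qN GN.
Qed.

Theorem lemma2 (Om : fieldType) (F : Om -> Prop) (a : Om) :
  quad_closure F -> (2%:R : Om) != 0 ->
  F a -> a != 0 -> ~ (exists b, F b /\ b * b = a) ->
  forall r : Om, r * r = a ->
  incl (ksup F 3) (ksup (adjoin F r) 3).
Proof.
move=> _ two _ _ _ r _.
by apply: kpow_incl two _ _; [apply: adjoin_subfield | apply: adjoin_base].
Qed.
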